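(* Let $\ell$ be even and let $G$ be an $(n,\ell)$-extremal graph of even order $n$ such that the maximum degree of $\overline{G}$ is at most $2$. Then each connected component of $\overline{G}$ is isomorphic to either $P_2$ or $P_4$.
   Context: All graphs are finite and simple; $\overline{G}$ is the complement of $G$; $P_k$ is the path on $k$ vertices. Vertex labels lie in $\mathbb{Z}_\ell$ ($\ell\ge2$). In the neighborhood Lights Out game on $G$, toggling a vertex $v$ adds $1$ (mod $\ell$) to the label of each vertex of the closed neighborhood $N[v]$; the game is won when all labels are $0$. $G$ is $N$-AW if the game can be won from every initial labeling. $\max(n,\ell)$ is the maximum number of edges of an $N$-AW graph on $n$ vertices, and an $(n,\ell)$-extremal graph is an $N$-AW graph on $n$ vertices with $\max(n,\ell)$ edges. *)

From mathcomp Require Import all_boot.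
Set Implicit Arguments. Unset Strict Implicit. Unset Printing Implicit Defensive.

Definition simple_graph (n : nat) (e : rel 'I_n) : Prop :=
  irreflexive e /\ symmetric e.

Definition cnbhd (n : nat) (e : rel 'I_n) (v : 'I_n) : {set 'I_n} :=
  [set u | (u == v) || e v u].

(* Neighborhood Lights Out over Z_l (labels encoded as nat mod l):
   every initial labeling b can be cleared by toggling each vertex u
   x u times (toggling u adds 1 to every vertex of N[u]). *)
Definition N_AW (n l : nat) (e : rel 'I_n) : Prop :=
  forall b : 'I_n -> nat, exists x : 'I_n -> nat,
    forall v : 'I_n, (b v + \sum_(u in cnbhd e v) x u) %% l = 0.

Definition nedges (n : nat) (e : rel 'I_n) : nat :=
  #|[set p : 'I_n * 'I_n | (p.1 < p.2) && e p.1 p.2]|.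

Definition extremal (n l : nat) (e : rel 'I_n) : Prop :=
  simple_graph e /\ N_AW l e /\
  forall e' : rel 'I_n, simple_graph e' -> N_AW l e' -> nedges e' <= nedges e.

Definition compl_graph (n : nat) (e : rel 'I_n) : rel 'I_n :=
  fun x y => (x != y) && ~~ e x y.

Definition degree (n : nat) (e : rel 'I_n) (v : 'I_n) : nat :=
  #|[set u | e v u]|.

Definition component (n : nat) (e : rel 'I_n) (v : 'I_n) : {set 'I_n} :=
  [set u | connect e v u].

Definition induced_iso_path (n : nat) (e : rel 'I_n) (C : {set 'I_n}) (k : nat)
  : Prop :=
  exists f : 'I_k -> 'I_n,
    injective f /\ f @: setT = C /\
    forall i j : 'I_k, e (f i) (f j) = ((i.+1 == j) || (j.+1 == i)).

From mathcomp Require Import all_boot all_algebra.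
From mathcomp Require Import ring zify.
Set Implicit Arguments. Unset Strict Implicit. Unset Printing Implicit Defensive.
Import GRing.Theory.

(* Over Z_l the toggle map is injective iff surjective, so G is N-AW iff no nonzero
   labeling x has, at every vertex v, the sum of x over the non-neighbours of v equal
   to the total sum of x.  Let H be the complement of G.  Two distinct vertices with
   the same H-neighbourhood would give such an x (a difference of indicators).  If
   w0-w1-w2-w3-w4 is a path of H starting at a leaf w0 with N_H(w2) = {w1, w3}, then
   adding w3w4 to G keeps it N-AW, which contradicts extremality.  Following the path
   from a leaf therefore shows that the H-component of any leaf is P_2 or P_4.  The
   vertices whose component has no leaf form an H-closed set U in which every degree
   is 0 or 2; U has even size because n and the other components are even, so
   (l/2) times the indicator of U would be a nonzero kernel vector.  Hence U is empty. *)

Lemma onto_injF (T : finType) (f : T -> T) :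
  (forall y, exists x, f x = y) -> injective f.
Proof.
move=> f_onto; apply: in2T; apply/image_injP.
by apply/eqP/eq_card => y; have [x <-] := f_onto y; rewrite codom_f.
Qed.

Lemma Zp_nat_eq0 l k : 1 < l -> (k%:R == 0 :> 'Z_l)%R = (k %% l == 0)%N.
Proof. by move=> l_gt1; rewrite -val_eqE /= val_Zp_nat. Qed.

Definition nbhd_balanced (R : zmodType) n (H : rel 'I_n) (x : 'I_n -> R) :=
  forall v, (\sum_(u | H v u) x u = \sum_u x u)%R.

Section LightsOutKernel.

Variables (n l : nat) (e : rel 'I_n).
Hypothesis l_gt1 : 1 < l.
Local Open Scope ring_scope.

Definition toggle_sum (x : {ffun 'I_n -> 'Z_l}) : {ffun 'I_n -> 'Z_l} :=
  [ffun v => \sum_(u in cnbhd e v) x u].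

Lemma N_AW_toggle_sum_onto :
  N_AW l e <-> forall t, exists x, toggle_sum x = t.
Proof.
split=> [naw t | onto b].
  have [x x_clears] := naw (fun v => val (- t v)).
  exists [ffun u => (x u)%:R]; apply/ffunP => v; rewrite !ffunE.
  have /eqP := x_clears v; rewrite -Zp_nat_eq0 // natrD natr_Zp natr_sum.
  by rewrite addrC subr_eq0 => /eqP <-; apply: eq_bigr => u _; rewrite ffunE.
have [x /ffunP x_clears] := onto [ffun v => - (b v)%:R].
exists (fun u => val (x u)) => v; apply/eqP; rewrite -Zp_nat_eq0 //.
rewrite natrD natr_sum (eq_bigr x) => [|u _]; last exact: natr_Zp.
by have := x_clears v; rewrite !ffunE => ->; rewrite subrr.
Qed.

Lemma N_AW_kernelP : N_AW l e <->
  forall x : 'I_n -> 'Z_l,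
    (forall v, \sum_(u in cnbhd e v) x u = 0) -> forall u, x u = 0.
Proof.
rewrite N_AW_toggle_sum_onto; split=> [/onto_injF toggle_inj x x_ker u | ker].
  suff /ffunP/(_ u) : finfun x = 0 by rewrite !ffunE.
  apply: toggle_inj; apply/ffunP => v; rewrite !ffunE (eq_bigr x) => [|w _]; last exact: ffunE.
  by rewrite x_ker big1 // => w _; rewrite ffunE.
have toggle_inj : injective toggle_sum.
  move=> X Y eqXY; apply/ffunP => u; apply/eqP; rewrite -subr_eq0; apply/eqP.
  apply: (ker (fun u => X u - Y u)) => v.
  by have /ffunP/(_ v) := eqXY; rewrite !ffunE sumrB => ->; rewrite subrr.
by move=> t; have [g _ toggleK] := injF_bij toggle_inj; exists (g t); apply: toggleK.
Qed.

Lemma sum_cnbhd_compl (R : zmodType) (x : 'I_n -> R) v :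
  \sum_(u in cnbhd e v) x u = \sum_u x u - \sum_(u | compl_graph e v u) x u.
Proof.
have -> : \sum_(u | compl_graph e v u) x u = \sum_(u | u \notin cnbhd e v) x u.
  by apply: eq_bigl => u; rewrite /cnbhd /compl_graph inE negb_or eq_sym.
by rewrite [in RHS](bigID (mem (cnbhd e v))) /= addrK.
Qed.

Lemma N_AW_balancedP : N_AW l e <->
  forall x : 'I_n -> 'Z_l, nbhd_balanced (compl_graph e) x -> forall u, x u = 0.
Proof.
have kerE (x : 'I_n -> 'Z_l) v :
    (\sum_(u in cnbhd e v) x u == 0) = (\sum_(u | compl_graph e v u) x u == \sum_u x u).
  by rewrite sum_cnbhd_compl subr_eq0 eq_sym.
rewrite N_AW_kernelP; split=> ker x x_bal; apply: ker => v; apply/eqP.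
  by rewrite kerE x_bal.
by rewrite -kerE x_bal.
Qed.

End LightsOutKernel.

Lemma sumr_delta (R : pzSemiRingType) (I : finType) (P : pred I) (c : I) :
  (\sum_(u | P u) (u == c)%:R = (P c)%:R :> R)%R.
Proof.
rewrite big_mkcond (bigD1 c) //= eqxx big1 ?addr0 => [|u /negbTE ->]; last by case: (P u).
by case: (P c).
Qed.

Lemma compl_graph_sym n (e : rel 'I_n) : symmetric e -> symmetric (compl_graph e).
Proof. by move=> e_sym x y; rewrite /compl_graph eq_sym e_sym. Qed.

Lemma N_AW_compl_twins_eq n l (e : rel 'I_n) a b :
  1 < l -> symmetric e -> N_AW l e -> compl_graph e a =1 compl_graph e b -> a = b.
Proof.
move=> l_gt1 e_sym /(N_AW_balancedP _ l_gt1) ker twins.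
pose x u : 'Z_l := ((u == a)%:R - (u == b)%:R)%R.
have xa0 : x a = 0%R.
  apply: ker => v; rewrite !sumrB !sumr_delta /= !(compl_graph_sym e_sym v) twins.
  by rewrite !subrr.
apply/eqP; apply: contra_eqT xa0 => ab.
by rewrite /x eqxx (negbTE ab) subr0 oner_neq0.
Qed.

Definition add_edge n (e : rel 'I_n) (x y : 'I_n) : rel 'I_n :=
  fun a b => e a b || ((a == x) && (b == y)) || ((a == y) && (b == x)).

Lemma compl_add_edgeE n (e : rel 'I_n) x y a b :
  compl_graph (add_edge e x y) a b =
  compl_graph e a b && ~~ (((a == x) && (b == y)) || ((a == y) && (b == x))).
Proof. by rewrite /compl_graph /add_edge -orbA negb_or andbA. Qed.

Lemma sum_compl_add_edge n (R : nmodType) (e : rel 'I_n) x y (z : 'I_n -> R) v :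
  compl_graph e x y -> symmetric e ->
  (\sum_(u | compl_graph e v u) z u =
   \sum_(u | compl_graph (add_edge e x y) v u) z u + z y *+ (v == x) + z x *+ (v == y))%R.
Proof.
move=> Hxy e_sym; have xy : x != y by case/andP: Hxy.
rewrite (bigID (fun u => ((v == x) && (u == y)) || ((v == y) && (u == x)))) /=.
rewrite addrC -addrA; congr (_ + _)%R; first by apply: eq_bigl => u; rewrite compl_add_edgeE.
have [-> | vx] := eqVneq v x.
  rewrite (negbTE xy) addr0 (big_pred1 y) // => u /=.
  by rewrite orbF andbC; case: eqP => // ->.
have [-> | vy] := eqVneq v y; last by rewrite big_pred0 ?addr0 // => u /=; rewrite andbF.
rewrite (big_pred1 x) ?add0r // => u /=.
by rewrite andbC; case: eqP => // ->; rewrite compl_graph_sym.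
Qed.

Lemma N_AW_add_edge n l (e : rel 'I_n) (w0 w1 w2 w3 w4 : 'I_n) :
  1 < l -> symmetric e -> N_AW l e ->
  compl_graph e w0 =1 pred1 w1 -> compl_graph e w2 =1 pred2 w1 w3 -> w1 != w3 ->
  compl_graph e w3 w4 -> w0 != w4 -> w2 != w4 ->
  N_AW l (add_edge e w3 w4).
Proof.
move=> l_gt1 e_sym /(N_AW_balancedP _ l_gt1) ker N0 N2 w13 H34 w04 w24.
have H_sym := compl_graph_sym e_sym.
have H23 : compl_graph e w2 w3 by rewrite N2 /= eqxx orbT.
have w23 : w2 != w3 by case/andP: H23.
have w03 : w0 != w3.
  apply/eqP => w0_w3; have /andP [w21 _] : compl_graph e w2 w1 by rewrite N2 /= eqxx.
  by move: H23; rewrite -w0_w3 H_sym N0 /= (negbTE w21).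
apply/(N_AW_balancedP _ l_gt1) => x x_bal.
have N0' : compl_graph (add_edge e w3 w4) w0 =1 pred1 w1.
  by move=> u; rewrite compl_add_edgeE N0 (negbTE w03) (negbTE w04) andbT.
have N2' : compl_graph (add_edge e w3 w4) w2 =1 pred2 w1 w3.
  by move=> u; rewrite compl_add_edgeE N2 (negbTE w23) (negbTE w24) andbT.
have x3 : x w3 = 0%R.
  have := x_bal w2; rewrite (bigD1 w3) /= ?N2' /= ?eqxx ?orbT //.
  rewrite (big_pred1 w1) => [|u]; last first.
    by rewrite N2' /= andb_orl andbN orbF; case: eqP => // ->.
  by rewrite -(x_bal w0) (big_pred1 w1) // addrC -{2}[x w1]addr0 => /addrI.
(* Compensating the lost complement edge w3w4 turns x into a kernel vector of the
   original graph, which must vanish. *)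
pose c := x w4.
pose y u := (x u + c * ((u == w0)%:R - (u == w2)%:R))%R.
have sum_y P : (\sum_(u | P u) y u = \sum_(u | P u) x u + c * ((P w0)%:R - (P w2)%:R))%R.
  by rewrite big_split /= -mulr_sumr sumrB !sumr_delta.
have y_bal : nbhd_balanced (compl_graph e) y.
  move=> v; rewrite !sum_y (sum_compl_add_edge _ _ H34 e_sym) x_bal x3 /=.
  rewrite !(H_sym v) N0 N2 /= /c.
  have [-> | _] := eqVneq v w1; first by rewrite (negbTE w13) /=; ring.
  by case: (v == w3); case: (v == w4) => /=; ring.
have c0 : c = 0%R.
  by have := ker y y_bal w4; rewrite /y !(eq_sym w4) (negbTE w04) (negbTE w24) subrr mulr0 addr0.
by move=> u; have := ker y y_bal u; rewrite /y c0 mul0r addr0.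
Qed.

Lemma add_edge_simple n (e : rel 'I_n) x y :
  simple_graph e -> x != y -> simple_graph (add_edge e x y).
Proof.
move=> [e_irr e_sym] xy; split=> [a | a b]; last first.
  by rewrite /add_edge e_sym orbAC (andbC (b == x)) (andbC (b == y)).
by rewrite /add_edge e_irr /=; case: eqP => [-> | _]; rewrite ?andbT ?andbF ?orbb // (negbTE xy).
Qed.

Lemma nedges_add_edge n (e : rel 'I_n) x y :
  symmetric e -> x != y -> ~~ e x y -> nedges (add_edge e x y) = (nedges e).+1.
Proof.
move=> e_sym; wlog xy : x y / x < y => [wlog_xy | _ nexy].
  move=> x_y nexy; have [xy | yx | /val_inj x_eq_y] := ltngtP x y.
  - exact: wlog_xy.
  - have -> : nedges (add_edge e x y) = nedges (add_edge e y x).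
      by apply: eq_card => p; rewrite !inE /add_edge orbAC.
    by apply: wlog_xy; rewrite // 1?eq_sym // e_sym.
  - by rewrite x_eq_y eqxx in x_y.
rewrite /nedges; suff -> : [set p : 'I_n * 'I_n | (p.1 < p.2) && add_edge e x y p.1 p.2] =
          (x, y) |: [set p : 'I_n * 'I_n | (p.1 < p.2) && e p.1 p.2].
  by rewrite cardsU1 inE /= (negbTE nexy) andbF.
apply/setP => -[a b]; rewrite !inE /add_edge /= xpair_eqE.
have [/andP [/eqP -> /eqP ->] | _] := boolP ((a == x) && (b == y)).
  by rewrite xy orbT.
have [/andP [/eqP -> /eqP ->] | _] := boolP ((a == y) && (b == x)).
  by rewrite ltnNge (ltnW xy).
by rewrite !orbF.
Qed.

Lemma extremal_add_edge_not_N_AW n l (e : rel 'I_n) x y :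
  extremal l e -> x != y -> ~~ e x y -> ~ N_AW l (add_edge e x y).
Proof.
move=> [e_simple [_ e_max]] xy nexy naw.
have := e_max _ (add_edge_simple e_simple xy) naw.
by rewrite nedges_add_edge // ?ltnn //; case: e_simple.
Qed.

Lemma degree_le2_nbhd n (H : rel 'I_n) x a :
  degree H x <= 2 -> H x a ->
  H x =1 pred1 a \/ exists2 b, b != a & H x =1 pred2 a b.
Proof.
move=> deg Hxa; have : #|[set u | H x u] :\ a| <= 1.
  by move: deg; rewrite /degree (cardsD1 a) inE Hxa.
have nbhdE z : H x z = (z == a) || (z \in [set u | H x u] :\ a).
  by rewrite !inE; case: eqVneq => // ->.
rewrite leq_eqVlt ltnS leqn0 => /orP [/cards1P [b Nxa] | /eqP/cards0_eq Nxa].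
  right; exists b => [|z]; last by rewrite nbhdE Nxa inE.
  by have := set11 b; rewrite -Nxa !inE => /andP [].
by left => z; rewrite nbhdE Nxa inE orbF.
Qed.

Lemma eq_component n (H : rel 'I_n) u v :
  symmetric H -> v \in component H u -> component H u = component H v.
Proof.
move=> H_sym; rewrite inE => uv; apply/setP => z; rewrite !inE.
by rewrite (same_connect (sym_connect_sym H_sym) uv).
Qed.

Definition path_nbhd (T : eqType) (x0 : T) (p : seq T) (i : nat) (z : T) : bool :=
  (z == nth x0 (x0 :: p) i.-1) && (0 < i) || (z == nth x0 (x0 :: p) i.+1) && (i < size p).

Section InducedPath.

Variables (n : nat) (H : rel 'I_n) (x0 : 'I_n) (p : seq 'I_n).
Hypothesis H_sym : symmetric H.
Hypothesis s_uniq : uniq (x0 :: p).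
Hypothesis s_nbhd : forall i, i <= size p -> H (nth x0 (x0 :: p) i) =1 path_nbhd x0 p i.
Local Notation s := (x0 :: p).

Lemma connect_path_nth i : i <= size p -> connect H x0 (nth x0 s i).
Proof.
elim: i => [|i IHi] ip; first exact: connect0.
apply: connect_trans (IHi (ltnW ip)) (connect1 _).
by rewrite s_nbhd ?(ltnW ip) // /path_nbhd /= eqxx ip orbT.
Qed.

Lemma index_path_le x : x \in s -> index x s <= size p.
Proof. by rewrite -index_mem. Qed.

Lemma component_path : component H x0 = [set x in s].
Proof.
apply/setP => z; rewrite !in_set; apply/idP/idP => [x0z | zs]; last first.
  by rewrite -(nth_index x0 zs); apply/connect_path_nth/index_path_le.
have s_closed : closed H [set x in s].
  apply: (intro_closed (sym_connect_sym H_sym)) => x y; rewrite !in_set => + xs.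
  have [i i_le ->] : exists2 i, i <= size p & x = nth x0 s i.
    by exists (index x s); rewrite ?index_path_le ?nth_index.
  rewrite s_nbhd // /path_nbhd /= => /orP [] /andP [/eqP -> i_bd].
    by apply: mem_nth; rewrite /= ltnS (leq_trans (leq_pred i)).
  by rewrite inE mem_nth ?orbT.
by have := closed_connect s_closed x0z; rewrite !in_set mem_head => <-.
Qed.

Lemma induced_iso_path_path : induced_iso_path H [set x in s] (size p).+1.
Proof.
exists (fun i : 'I_(size p).+1 => nth x0 s i); split; [|split].
- by move=> i j /eqP; rewrite nth_uniq // => /eqP /val_inj.
- apply/setP => x; rewrite in_set; apply/imsetP/idP => [[i _ ->] | xs]; first exact: mem_nth.
  have xi : index x s < (size p).+1 by rewrite index_mem.
  by exists (Ordinal xi); rewrite ?nth_index.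
move=> [i lt_i] [j lt_j] /=; rewrite s_nbhd // /path_nbhd.
rewrite (andb_id2r (fun ip : i < size p => @nth_uniq _ x0 s j i.+1 lt_j ip s_uniq)).
rewrite (andb_id2r (fun _ => @nth_uniq _ x0 s j i.-1 lt_j (leq_ltn_trans (leq_pred i) lt_i) s_uniq)).
by case: i lt_i => [|i] /= lt_i; lia.
Qed.

Lemma component_induced_path u :
  x0 \in component H u -> induced_iso_path H (component H u) (size p).+1.
Proof.
by move=> x0u; rewrite (eq_component H_sym x0u) component_path; apply: induced_iso_path_path.
Qed.

End InducedPath.

Lemma extremal_leaf_component n l (e : rel 'I_n) w0 u :
  1 < l -> extremal l e -> (forall v, degree (compl_graph e) v <= 2) ->
  degree (compl_graph e) w0 = 1 -> w0 \in component (compl_graph e) u ->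
  induced_iso_path (compl_graph e) (component (compl_graph e) u) 2 \/
  induced_iso_path (compl_graph e) (component (compl_graph e) u) 4.
Proof.
move=> l_gt1 ext deg leaf w0u; have [[_ e_sym] [naw _]] := ext.
set H := compl_graph e in deg leaf w0u *.
have H_sym : symmetric H := compl_graph_sym e_sym.
have edge_neq x y : H x y -> x != y by case/andP.
have [w1 N0] : exists w1, H w0 =1 pred1 w1.
  have /cards1P [w1 Nw0] : #|[set z | H w0 z]| == 1 by rewrite -leaf.
  by exists w1 => z; move/setP: Nw0 => /(_ z); rewrite !inE.
have H01 : H w0 w1 by rewrite N0 /=.
have [N1 | [w2 w20 N1]] := degree_le2_nbhd (deg w1) (etrans (H_sym _ _) H01).
  left; apply: (component_induced_path (x0 := w0) (p := [:: w1]) H_sym) => //=.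
    by rewrite inE edge_neq.
  by move=> [|[|]] // _ z; rewrite /path_nbhd /= ?N0 ?N1 /= ?ltnn ?ltn0Sn ?andbT ?andbF ?orbF.
have H12 : H w1 w2 by rewrite N1 /= eqxx orbT.
have [N2 | [w3 w31 N2]] := degree_le2_nbhd (deg w2) (etrans (H_sym _ _) H12).
  have twins : H w0 =1 H w2 by move=> z; rewrite N0 N2.
  by move: w20; rewrite (N_AW_compl_twins_eq l_gt1 e_sym naw twins) eqxx.
have H23 : H w2 w3 by rewrite N2 /= eqxx orbT.
have [N3 | [w4 w42 N3]] := degree_le2_nbhd (deg w3) (etrans (H_sym _ _) H23).
  right; apply: (component_induced_path (x0 := w0) (p := [:: w1; w2; w3]) H_sym) => //=; last first.
    by move=> [|[|[|[|]]]] // _ z; rewrite /path_nbhd /= ?N0 ?N1 ?N2 ?N3 /= ?ltnn ?ltn0Sn ?andbT ?andbF ?orbF.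
  have w03 : w0 != w3 by apply: contraTneq H01 => ->; rewrite N3 /= (edge_neq _ _ H12).
  by rewrite !inE !negb_or (eq_sym w0 w2) (eq_sym w1 w3) w20 w31 w03 !edge_neq.
have H34 : H w3 w4 by rewrite N3 /= eqxx orbT.
have w04 : w0 != w4 by apply: contraTneq H34 => <-; rewrite H_sym N0 /= w31.
exfalso; apply: (extremal_add_edge_not_N_AW ext (edge_neq _ _ H34)); first by case/andP: H34.
by apply: (N_AW_add_edge l_gt1 e_sym naw N0 N2); rewrite // eq_sym.
Qed.

Lemma even_card_closed n (H : rel 'I_n) (A : {set 'I_n}) :
  symmetric H -> closed H A -> {in A, forall x, ~~ odd #|component H x|} -> ~~ odd #|A|.
Proof.
move=> /sym_connect_sym H_sym A_closed even_comp.
have eqiR : {in A & &, equivalence_rel (connect H)}.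
  by move=> x y z _ _ _; split=> [|/(same_connect H_sym)]; rewrite ?connect0.
rewrite (card_partition (equivalence_partitionP eqiR)) -dvdn2.
apply: dvdn_sum => _ /imsetP [x xA ->].
suff -> : [set y in A | connect H x y] = component H x by rewrite dvdn2 even_comp.
apply/setP => y; rewrite !inE andb_idl // => /(closed_connect A_closed) <-; exact: xA.
Qed.

Lemma Zp_half_order2 l :
  1 < l -> ~~ odd l -> exists2 h : 'Z_l, h != 0%R & (h *+ 2 = 0)%R.
Proof.
move=> l_gt1 l_even; have l_halfK : l./2 * 2 = l by rewrite muln2 even_halfK.
exists (l./2)%:R%R; last by rewrite -mulrnA l_halfK pchar_Zp.
by rewrite Zp_nat_eq0 // modn_small; lia.
Qed.

Lemma N_AW_compl_even_closed_eq0 n l (e : rel 'I_n) (U : {set 'I_n}) :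
  1 < l -> ~~ odd l -> symmetric e -> N_AW l e ->
  closed (compl_graph e) U -> {in U, forall u, ~~ odd (degree (compl_graph e) u)} ->
  ~~ odd #|U| -> U = set0.
Proof.
move=> l_gt1 l_even e_sym /(N_AW_balancedP _ l_gt1) ker U_closed deg_even U_even.
have [h h_neq0 h2] := Zp_half_order2 l_gt1 l_even.
have h_even k : ~~ odd k -> (h *+ k = 0)%R.
  by move=> k_even; rewrite -[k]odd_double_half (negbTE k_even) -mul2n mulrnA h2 mul0rn.
pose y u : 'Z_l := if u \in U then h else 0%R.
have sum_y (P : pred 'I_n) : (\sum_(u | P u) y u = h *+ #|[set u in U | P u]|)%R.
  by rewrite -big_mkcondr -sumr_const; apply: eq_bigl => u; rewrite !inE andbC.
have y_bal : nbhd_balanced (compl_graph e) y.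
  move=> v; rewrite !sum_y [in RHS]h_even; last by rewrite (eq_card (B := U)) // => u; rewrite !inE andbT.
  have [vU | vU] := boolP (v \in U).
    suff -> : [set u in U | compl_graph e v u] = [set u | compl_graph e v u] by rewrite h_even ?deg_even.
    by apply/setP => u; rewrite !inE andb_idl // => /U_closed <-.
  suff -> : [set u in U | compl_graph e v u] = set0 by rewrite cards0.
  apply/setP => u; rewrite !inE; apply/negbTE; apply: contra vU => /andP [uU /U_closed].
  by rewrite uU.
apply/setP => u; rewrite inE; apply: contraNF h_neq0 => uU.
by have := ker y y_bal u; rewrite /y uU => ->.
Qed.

Lemma induced_iso_path_card n (H : rel 'I_n) C k : induced_iso_path H C k -> #|C| = k.
Proof. by move=> [f [f_inj [<- _]]]; rewrite card_imset // cardsT card_ord. Qed.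

Theorem theorem4p9 (n l : nat) (e : rel 'I_n) :
  2 <= l -> ~~ odd l -> ~~ odd n ->
  extremal l e ->
  (forall v : 'I_n, degree (compl_graph e) v <= 2) ->
  forall v : 'I_n,
    induced_iso_path (compl_graph e) (component (compl_graph e) v) 2 \/
    induced_iso_path (compl_graph e) (component (compl_graph e) v) 4.
Proof.
move=> l_gt1 l_even n_even ext deg v; have [[_ e_sym] [naw _]] := ext.
set H := compl_graph e in deg *; have H_sym : symmetric H := compl_graph_sym e_sym.
pose U := [set u | [forall w in component H u, degree H w != 1]].
suff : v \notin U.
  rewrite inE => /forall_inPn [w0 w0v /negPn /eqP leaf].
  exact: extremal_leaf_component l_gt1 ext deg leaf w0v.
have U_closed : closed H U.
  move=> x y Hxy; rewrite !inE (eq_component H_sym (_ : y \in component H x)) //.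
  by rewrite inE connect1.
have UC_even : ~~ odd #|~: U|.
  apply: even_card_closed H_sym _ _ => [x y /U_closed | x]; rewrite !inE; first by move->.
  move=> /forall_inPn [w0 w0x /negPn /eqP leaf].
  by case: (extremal_leaf_component l_gt1 ext deg leaf w0x) => /induced_iso_path_card ->.
have U_even : ~~ odd #|U|.
  have : ~~ odd (#|U| + #|~: U|) by rewrite cardsC card_ord.
  by rewrite oddD (negbTE UC_even) addbF.
have deg_even : {in U, forall u, ~~ odd (degree H u)}.
  move=> u; rewrite inE => /forall_inP /(_ u); rewrite inE connect0 => /(_ isT).
  by have := deg u; case: (degree H u) => [|[|[|]]].
by rewrite (N_AW_compl_even_closed_eq0 l_gt1 l_even e_sym naw U_closed deg_even U_even) inE.
Qed.
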